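(* For every integer $n\ge 5$, up to isomorphism, \[\operatorname{obs}(C_n)=\operatorname{obs}(P_{n-1})\setminus\{C_n\}\quad\text{and}\quad\operatorname{obs}(P_{n-1})=\operatorname{obs}(C_n)\cup\{C_n\}.\]
   Context: All graphs are finite, simple and loopless. $P_n$ and $C_n$ denote the path and cycle on $n$ vertices. A full-homomorphism $\varphi\colon G\to H$ is a map $V(G)\to V(H)$ such that for all $x,y\in V(G)$, $xy\in E(G)$ if and only if $\varphi(x)\varphi(y)\in E(H)$. A full $H$-colouring of $G$ is a full-homomorphism $G\to H$. A minimal $H$-obstruction is a graph $G$ that admits no full $H$-colouring while every proper induced subgraph of $G$ admits one; $\operatorname{obs}(H)$ denotes the set of minimal $H$-obstructions (up to isomorphism). *)

From mathcomp Require Import all_boot.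
Set Implicit Arguments. Unset Strict Implicit. Unset Printing Implicit Defensive.

Record sgraph := SGraph {
  vtx : finType;
  adj : rel vtx;
  adj_sym : symmetric adj;
  adj_irr : irreflexive adj }.

Section OfRel.
Variables (T : finType) (r : rel T).
Definition sym_rel : rel T := fun x y => (x != y) && (r x y || r y x).
Lemma sym_rel_sym : symmetric sym_rel.
Proof. by move=> x y; rewrite /sym_rel eq_sym orbC. Qed.
Lemma sym_rel_irr : irreflexive sym_rel.
Proof. by move=> x; rewrite /sym_rel eqxx. Qed.
Definition graph_of_rel : sgraph := SGraph sym_rel_sym sym_rel_irr.
End OfRel.

Definition path_graph (m : nat) : sgraph :=
  @graph_of_rel ('I_m : finType) (fun i j => nat_of_ord j == (nat_of_ord i).+1).

Definition cycle_graph (n : nat) : sgraph :=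
  @graph_of_rel ('I_n : finType) (fun i j => nat_of_ord j == ((nat_of_ord i).+1 %% n)).

Definition full_hom (G H : sgraph) (f : vtx G -> vtx H) : Prop :=
  forall x y : vtx G, adj x y = adj (f x) (f y).

Definition full_colourable_on (G H : sgraph) (S : {set vtx G}) : Prop :=
  exists f : vtx G -> vtx H,
    forall x y, x \in S -> y \in S -> adj x y = adj (f x) (f y).

Definition min_obstruction (H G : sgraph) : Prop :=
  ~ (exists f : vtx G -> vtx H, full_hom f) /\
  forall S : {set vtx G}, S \proper [set: vtx G] -> full_colourable_on H S.

Definition graph_iso (G H : sgraph) : Prop :=
  exists f : vtx G -> vtx H, bijective f /\ full_hom f.

From mathcomp Require Import all_boot zify.
From Stdlib Require Import Classical.
Set Implicit Arguments. Unset Strict Implicit. Unset Printing Implicit Defensive.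

(* P_(n-1) is C_n with a vertex deleted, so a full C_n-colouring that misses a
   vertex is a full P_(n-1)-colouring, while a surjective one exhibits an
   induced C_n. Full homomorphisms out of C_n (n >= 5) are injective, so C_n
   itself has no full P_(n-1)-colouring. The heart of the matter is that a
   minimal C_n-obstruction G contains no induced C_n. Call v a twin of the
   cycle vertex j if v is adjacent to exactly the neighbours of j on the
   cycle. If a vertex x off the cycle had no twin, then colouring G minus a
   cycle vertex k would show that x has exactly 3 neighbours on the cycle when
   k is one of them and 1 or 2 otherwise, which is impossible as k varies.
   So every vertex has a twin, and mapping each vertex to its twin is a full
   C_n-colouring of G. *)

Definition induced_cycle n (G : sgraph) (e : 'I_n -> vtx G) : Prop :=
  forall i j, adj (e i) (e j) = @adj (cycle_graph n) i j.

Section Cycle.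
Variable n : nat.
Local Notation adjC := (@adj (cycle_graph n)).
Local Notation nbr i := [set j : 'I_n | adjC i j].

Let modS (i : nat) : i < n -> i.+1 %% n = if i.+1 == n then 0 else i.+1.
Proof. by move=> lt_in; case: eqP => [->|ne]; [rewrite modnn | rewrite modn_small; lia]. Qed.

Lemma adj_cycleE (i j : 'I_n) : 3 <= n ->
  adjC i j = [|| (j : nat) == i.+1, (i : nat) == j.+1,
                ((i : nat) == 0) && ((j : nat) == n.-1)
              | ((j : nat) == 0) && ((i : nat) == n.-1)].
Proof.
move=> n_ge3; have := ltn_ord i; have := ltn_ord j.
rewrite /= /sym_rel /= !modS //.
have -> : (i != j) = ((i : nat) != j) by [].
by case: ifP => /eqP; case: ifP => /eqP; move=> *; apply/idP/idP; lia.
Qed.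

Lemma card_cycle_nbr (i : 'I_n) : 3 <= n -> #|nbr i| = 2.
Proof.
move=> n_ge3; have lt_in := ltn_ord i.
have succ_mod : i.+1 %% n = if i.+1 == n then 0 else i.+1 by rewrite modS.
have pred_mod : (i + n).-1 %% n = if i == 0 :> nat then n.-1 else i.-1.
  case: (i : nat) lt_in => [|m] lt_mn /=; first by rewrite modn_small; lia.
  by rewrite -[X in X %% _]/(m + n) modnDr modn_small; lia.
suff -> : nbr i = [set ordS i; ord_pred i].
  suff neq : ordS i != ord_pred i by rewrite cards2 neq.
  apply/eqP => /(congr1 (@nat_of_ord _)) /=; rewrite succ_mod pred_mod.
  by do 2!case: ifP => /eqP; lia.
apply/setP => j; rewrite !inE adj_cycleE // -!val_eqE /= succ_mod pred_mod.
by have := ltn_ord j; do 2!case: ifP => /eqP; lia.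
Qed.

Hypothesis n_ge5 : 5 <= n.

Lemma cycle_C4_free (i j k l : 'I_n) : i != j -> k != l ->
  adjC i k -> adjC j k -> adjC i l -> adjC j l -> False.
Proof.
rewrite !adj_cycleE; try lia.
have := ltn_ord i; have := ltn_ord j; have := ltn_ord k; have := ltn_ord l.
have -> : (i != j) = ((i : nat) != j) by [].
have -> : (k != l) = ((k : nat) != l) by [].
move: (i : nat) (j : nat) (k : nat) (l : nat) => *; lia.
Qed.

Lemma cycle_nbr_inj : injective (fun i : 'I_n => nbr i).
Proof.
move=> i j /= eq_nbr; apply/eqP/negPn/negP => neq_ij.
have /cards2P [k [l [neq_kl nbr_i]]] : #|nbr i| == 2 by rewrite card_cycle_nbr //; lia.
have adj_kl m x : nbr m = [set k; l] -> x \in [set k; l] -> adjC m x.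
  by move=> <-; rewrite inE.
have nbr_j : nbr j = [set k; l] by rewrite -eq_nbr.
by apply: (cycle_C4_free neq_ij neq_kl); apply: adj_kl; rewrite ?set21 ?set22.
Qed.

Lemma cycle_eq_nbr_off (a i j : 'I_n) :
  (forall k, k != a -> adjC i k = adjC j k) -> i = j.
Proof.
move=> same_off; apply: cycle_nbr_inj.
have eq_off : nbr i :\ a = nbr j :\ a.
  by apply/setP => k; rewrite !in_setD1 !inE; case: eqVneq => //= /same_off.
have card_i := cardsD1 a (nbr i); have card_j := cardsD1 a (nbr j).
rewrite !card_cycle_nbr ?eq_off in card_i card_j; try lia.
have mem_a : (a \in nbr i) = (a \in nbr j).
  by move: card_i card_j; case: (a \in nbr i); case: (a \in nbr j) => // ? ?; exfalso; lia.
apply/setP => k; case: (eqVneq k a) => [-> //|k_a].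
by move/setP: eq_off => /(_ k); rewrite !in_setD1 k_a.
Qed.

Lemma full_hom_cycle_inj (X : sgraph) (g : 'I_n -> vtx X) :
  (forall i j, adjC i j = adj (g i) (g j)) -> injective g.
Proof.
by move=> g_full i j g_ij; apply: (@cycle_eq_nbr_off i) => k _; rewrite !g_full g_ij.
Qed.

End Cycle.

Lemma min_obstruction_colourable_off (H G : sgraph) (v : vtx G) :
  min_obstruction H G -> exists f : vtx G -> vtx H,
    forall x y, x != v -> y != v -> adj x y = adj (f x) (f y).
Proof.
case=> _ /(_ [set~ v]) [].
  by rewrite properT; apply/eqP => /setP /(_ v); rewrite !inE eqxx.
by move=> f f_full; exists f => x y x_v y_v; apply: f_full; rewrite in_setC1.
Qed.

Section InducedCycle.
Variables (n : nat) (G : sgraph).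
Hypothesis n_ge5 : 5 <= n.
Local Notation adjC := (@adj (cycle_graph n)).

Definition twin (e : 'I_n -> vtx G) (v : vtx G) (j : 'I_n) : Prop :=
  forall l, adj v (e l) = adjC j l.

Lemma induced_cycle_inj (e : 'I_n -> vtx G) : induced_cycle e -> injective e.
Proof. by move=> e_ind; apply: (full_hom_cycle_inj n_ge5) => i j; rewrite e_ind. Qed.

Lemma induced_cycle_swap (e : 'I_n -> vtx G) x a : induced_cycle e -> twin e x a ->
  induced_cycle (fun l => if l == a then x else e l).
Proof.
move=> e_ind tw_x i j; case: (eqVneq i a) => [->|_]; case: (eqVneq j a) => [->|_].
- by rewrite !adj_irr.
- exact: tw_x.
- by rewrite adj_sym tw_x adj_sym.
- exact: e_ind.
Qed.

Hypothesis G_min : min_obstruction (cycle_graph n) G.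

Section Twinless.
Variables (e : 'I_n -> vtx G) (x : vtx G).
Hypotheses (e_ind : induced_cycle e) (x_out : x \notin codom e)
  (x_notwin : forall j, ~ twin e x j).
Let A := [set l | adj x (e l)].

Section DeleteVertex.
Variables (k : 'I_n) (f : vtx G -> vtx (cycle_graph n)).
Hypothesis f_full : forall u v, u != e k -> v != e k -> adj u v = adjC (f u) (f v).

Let n_ge3 : 3 <= n. Proof. exact: ltnW (ltnW n_ge5). Qed.

Let e_k l : l != k -> e l != e k.
Proof. by rewrite (inj_eq (induced_cycle_inj e_ind)). Qed.

Let fe_full l l' : l != k -> l' != k -> adjC l l' = adjC (f (e l)) (f (e l')).
Proof. by move=> l_k l'_k; rewrite -e_ind f_full ?e_k. Qed.

Let A_off l : l != k -> (l \in A) = adjC (f x) (f (e l)).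
Proof.
have x_k : x != e k by apply: contraNneq x_out => ->; exact: codom_f.
by move=> l_k; rewrite inE f_full ?e_k.
Qed.

Let fe_inj : {in [set~ k] &, injective (f \o e)}.
Proof.
move=> l l'; rewrite !in_setC1 => l_k l'_k /= fe_eq.
apply: (@cycle_eq_nbr_off _ n_ge5 k) => m m_k.
by rewrite (@fe_full l) // (@fe_full l') // fe_eq.
Qed.

(* Off [k], [x] sees the copy as [j] does, and [x] is not a twin of [j]. *)
Lemma twinless_card_hit j : j != k -> f x = f (e j) -> #|A| = if k \in A then 3 else 1.
Proof.
move=> j_k fx_j.
have A_j : A :\ k = [set l | adjC j l] :\ k.
  apply/setP => l; rewrite !in_setD1; case: eqVneq => //= l_k.
  by rewrite A_off // inE fx_j -fe_full.
have k_A : (k \in A) != adjC j k.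
  apply/negP => /eqP k_A; apply: (@x_notwin j) => l.
  case: (eqVneq l k) => [->|l_k]; first by rewrite -k_A inE.
  by move/setP: A_j => /(_ l); rewrite !in_setD1 !inE l_k.
have := cardsD1 k [set l | adjC j l]; rewrite card_cycle_nbr // -A_j inE.
by move: k_A (cardsD1 k A); case: (k \in A); case: (adjC j k) => //= _ ? ?; lia.
Qed.

(* [f \o e] maps [A :\ k] onto the neighbours of the one colour it misses. *)
Lemma twinless_card_miss : f x \notin (f \o e) @: [set~ k] -> #|A| = (k \in A) + 2.
Proof.
move=> fx_miss; rewrite (cardsD1 k A); congr (_ + _).
have im_fe : (f \o e) @: [set~ k] = [set~ f x].
  apply/eqP; rewrite eqEcard card_in_imset // !cardsC1 leqnn andbT.
  apply/subsetP => _ /imsetP [l l_k ->]; rewrite in_setC1.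
  by apply: contraNneq fx_miss => <-; exact: imset_f.
have fe_A : (f \o e) @: (A :\ k) = [set u | adjC (f x) u].
  apply/setP => u; rewrite inE; apply/imsetP/idP => [[l] | fx_u].
    by rewrite in_setD1 => /andP [l_k l_A] ->; rewrite -A_off.
  have : u \in [set~ f x] by rewrite in_setC1; apply: contraTneq fx_u => ->; rewrite adj_irr.
  rewrite -im_fe => /imsetP [l]; rewrite in_setC1 => l_k u_l; subst u.
  by exists l => //; rewrite in_setD1 l_k A_off.
rewrite -(card_cycle_nbr (f x)) // -fe_A card_in_imset //.
by apply: sub_in2 fe_inj => l; rewrite in_setD1 in_setC1 => /andP [].
Qed.

End DeleteVertex.

Lemma twinless_nbr_card k : if k \in A then #|A| = 3 else 0 < #|A| < 3.
Proof.
have [f f_full] := min_obstruction_colourable_off (e k) G_min.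
case: (boolP (f x \in (f \o e) @: [set~ k])) => [/imsetP [j] | fx_miss].
  by rewrite in_setC1 => j_k /(twinless_card_hit f_full j_k) ->; case: (k \in A).
by rewrite (twinless_card_miss f_full fx_miss); case: (k \in A).
Qed.

Lemma twinless_false : False.
Proof.
have k0 : 'I_n by exists 0; lia.
have := twinless_nbr_card k0; case: ifP => [_ card_A | _ /andP [/card_gt0P [k k_A] card_A]].
  suff A_T : A = setT by move: card_A; rewrite A_T cardsT card_ord; lia.
  apply/setP => k; rewrite in_setT; apply/negP => /negP k_A.
  by move: (twinless_nbr_card k); rewrite (negbTE k_A) card_A.
by move: (twinless_nbr_card k); rewrite k_A => card_A'; rewrite card_A' in card_A.
Qed.

End Twinless.

Lemma induced_cycle_twin (e : 'I_n -> vtx G) :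
  induced_cycle e -> forall v, exists j, twin e v j.
Proof.
move=> e_ind v; case: (boolP (v \in codom e)) => [/codomP [i ->] | v_out].
  by exists i; exact: e_ind.
case: (classic (exists j, twin e v j)) => // no_twin; exfalso.
by apply: (twinless_false e_ind v_out) => j tw_j; apply: no_twin; exists j.
Qed.

(* Putting [x] in place of its twin [a] gives another copy of C_n, relative to
   which [y] still has twin [b]; adjacency to [x] is then adjacency to [a]. *)
Lemma twin_adj (e : 'I_n -> vtx G) x y a b :
  induced_cycle e -> twin e x a -> twin e y b -> adj x y = adjC a b.
Proof.
move=> e_ind tw_x tw_y.
have [c tw_c] := induced_cycle_twin (induced_cycle_swap e_ind tw_x) y.
have c_b : c = b.
  by apply: (@cycle_eq_nbr_off _ n_ge5 a) => l l_a; rewrite -tw_c -tw_y (negbTE l_a).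
by rewrite adj_sym; have := tw_c a; rewrite eqxx c_b => ->; exact: adj_sym.
Qed.

Lemma min_obstruction_no_induced_cycle (e : 'I_n -> vtx G) : ~ induced_cycle e.
Proof.
move=> e_ind; have /fin_all_exists [t tw_t] := induced_cycle_twin e_ind.
by apply: G_min.1; exists t => x y; exact: twin_adj.
Qed.

End InducedCycle.

Section CycleAndPath.
Variable p : nat.
Hypothesis p_ge3 : 3 <= p.
Local Notation n := p.+2.
Local Notation C := (cycle_graph p.+2).
Local Notation P := (path_graph p.+1).
Local Notation adjC := (@adj (cycle_graph p.+2)).
Local Notation adjP := (@adj (path_graph p.+1)).
Local Notation widen := (widen_ord (leqnSn p.+1)).

Let n_ge5 : 5 <= n := p_ge3.
Let n_ge3 : 3 <= n. Proof. exact: ltnW (ltnW n_ge5). Qed.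

Lemma adj_path_widen (i j : 'I_p.+1) : adjP i j = adjC (widen i) (widen j).
Proof.
rewrite adj_cycleE // /= /sym_rel /=.
have -> : (i != j) = ((i : nat) != j) by [].
by have := ltn_ord i; have := ltn_ord j; move: (i : nat) (j : nat) => *; apply/idP/idP; lia.
Qed.

(* Deleting [m] from C_n leaves the path m+1, ..., n-1, 0, ..., m-1. *)
Lemma cycle_minus_vertex_path (m : 'I_n) : exists h : 'I_n -> 'I_p.+1,
  forall i j, i != m -> j != m -> adjC i j = adjP (h i) (h j).
Proof.
pose hv (i : 'I_n) := if m < i then i - m.+1 else i + n - m.+1.
have hv_lt (i : 'I_n) : i != m -> hv i < p.+1.
  by rewrite -val_eqE /hv; have := ltn_ord i; have := ltn_ord m; case: ifP => /=; lia.
exists (fun i => inord (hv i)) => i j i_m j_m.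
have hv_i := hv_lt i i_m; have hv_j := hv_lt j j_m.
rewrite adj_cycleE // /= /sym_rel /=.
have -> : (inord (hv i) != inord (hv j) :> 'I_p.+1) = (hv i != hv j).
  by rewrite -val_eqE /= !inordK.
rewrite !inordK //.
move: i_m j_m hv_i hv_j; rewrite -!val_eqE /=.
have := ltn_ord i; have := ltn_ord m; have := ltn_ord j.
by rewrite /hv; case: ifP; case: ifP => /= *; apply/idP/idP; lia.
Qed.

Lemma no_full_hom_cycle_path (g : 'I_n -> 'I_p.+1) :
  ~ (forall i j, adjC i j = adjP (g i) (g j)).
Proof.
move=> g_full; have := leq_card g (full_hom_cycle_inj n_ge5 g_full).
by rewrite !card_ord ltnn.
Qed.

Lemma full_colouring_cycle_cases (G : sgraph) (S : {set vtx G}) (f : vtx G -> vtx C) :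
  (forall x y, x \in S -> y \in S -> adj x y = adj (f x) (f y)) ->
  full_colourable_on P S \/
  exists2 e : 'I_n -> vtx G, induced_cycle e & forall i, f (e i) = i.
Proof.
move=> f_full.
case: (boolP [exists m, [forall x in S, f x != m]]) => [/existsP [m /forallP f_miss] | f_onto].
  left; have [h h_full] := cycle_minus_vertex_path m.
  exists (h \o f) => x y xS yS; rewrite f_full // h_full //.
  - exact: implyP (f_miss x) xS.
  - exact: implyP (f_miss y) yS.
right; have f_pre (m : 'I_n) : exists x, (x \in S) && (f x == m).
  move/existsPn: f_onto => /(_ m) /forallPn [x].
  by rewrite negb_imply negbK => x_pre; exists x.
have /fin_all_exists [e e_pre] := f_pre.
have [e_S f_e] : (forall i, e i \in S) /\ (forall i, f (e i) = i).
  by split => i; case/andP: (e_pre i) => // _ /eqP.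
by exists e => // i j; rewrite f_full // !f_e.
Qed.

Lemma min_obstruction_cycle_path (G : sgraph) :
  min_obstruction C G -> min_obstruction P G.
Proof.
move=> G_min; split.
  case=> g g_full; apply: G_min.1; exists (widen \o g) => x y.
  by rewrite g_full adj_path_widen.
move=> S S_proper; have [f f_full] := G_min.2 S S_proper.
have [//|[e e_ind _]] := full_colouring_cycle_cases f_full.
by have := min_obstruction_no_induced_cycle n_ge5 G_min e_ind.
Qed.

(* A full C_n-colouring of G is onto, so it spans an induced C_n; if this copy
   is not all of G, deleting a vertex off it leaves a graph with an induced
   C_n and a full P_(n-1)-colouring. *)
Lemma min_obstruction_path_cycle (G : sgraph) :
  min_obstruction P G -> ~ graph_iso G C -> min_obstruction C G.
Proof.
move=> G_min not_iso; split; last first.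
  move=> S S_proper; have [g g_full] := G_min.2 S S_proper.
  by exists (widen \o g) => x y xS yS; rewrite g_full // adj_path_widen.
case=> f f_full.
have [[g g_full]|[e e_ind f_e]] :=
  @full_colouring_cycle_cases G setT f (fun x y _ _ => f_full x y).
  by apply: G_min.1; exists g => x y; apply: g_full; rewrite inE.
case: (boolP [forall v, v \in codom e]) => [/forallP e_onto | /forallPn [z z_out]].
  apply: not_iso; exists f; split=> //; exists e => [v|//].
  by have /codomP [i ->] := e_onto v; rewrite f_e.
have [h h_full] := min_obstruction_colourable_off z G_min.
apply: (@no_full_hom_cycle_path (h \o e)) => i j.
by rewrite -e_ind h_full //; apply: contraNneq z_out => <-; exact: codom_f.
Qed.

Lemma iso_cycle_min_obstruction_path (G : sgraph) :
  graph_iso G C -> min_obstruction P G.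
Proof.
case=> f [[f' fK f'K] f_full]; split.
  case=> g g_full; apply: (@no_full_hom_cycle_path (g \o f')) => i j.
  by rewrite -g_full f_full !f'K.
move=> S /properP [_ [z _ z_out]].
have [h h_full] := cycle_minus_vertex_path (f z).
exists (h \o f) => x y xS yS; rewrite f_full h_full //.
- by apply: contraNneq z_out => /(can_inj fK) <-.
- by apply: contraNneq z_out => /(can_inj fK) <-.
Qed.

End CycleAndPath.

Theorem corollary3p9 (n : nat) : 5 <= n ->
  (forall G : sgraph,
     min_obstruction (cycle_graph n) G <->
     (min_obstruction (path_graph (n - 1)) G /\ ~ graph_iso G (cycle_graph n))) /\
  (forall G : sgraph,
     min_obstruction (path_graph (n - 1)) G <->
     (min_obstruction (cycle_graph n) G \/ graph_iso G (cycle_graph n))).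
Proof.
case: n => [|[|p]] // n_ge5; rewrite subn1 /=.
split=> G; split.
- move=> G_min; split; first exact: min_obstruction_cycle_path.
  by case=> f [_ f_full]; apply: G_min.1; exists f.
- by case; apply: min_obstruction_path_cycle.
- move=> G_min; case: (classic (graph_iso G (cycle_graph p.+2))) => [|not_iso].
    by right.
  by left; apply: min_obstruction_path_cycle.
- case=> [G_min | G_iso].
    exact: min_obstruction_cycle_path.
  exact: iso_cycle_min_obstruction_path.
Qed.
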